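(* Let $k\ge 2$ be an integer. Every maximal (with respect to inclusion) $k$-thin subset of $\mathbb{Z}_2^\omega$ is neither Borel nor meager.
   Context: $\mathbb{Z}_2^\omega$ is the Cantor cube of infinite binary sequences indexed by $\omega=\{0,1,2,\dots\}$, with the product topology. The Hamming distance is $\mathrm{hd}(x,y)=|\{i: x(i)\ne y(i)\}|\in\omega\cup\{\omega\}$, and the minimum distance of $T\subseteq\mathbb{Z}_2^\omega$ is $\mathrm{HD}(T)=\inf\{\mathrm{hd}(x,y): x,y\in T, x\ne y\}$ (infimum of the empty set being $+\infty$). A set $T$ is $k$-thin if $\mathrm{HD}(T)\ge k$. *)

From HB Require Import structures.
From mathcomp Require Import all_boot all_order all_algebra.
From mathcomp Require Import boolp classical_sets functions cardinality reals topology.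
From mathcomp Require Import measure cantor.
Set Implicit Arguments. Unset Strict Implicit. Unset Printing Implicit Defensive.
Local Open Scope classical_set_scope.

(* The Cantor cube Z_2^omega = bool^nat with the product topology:
   mathcomp-analysis's [cantor_space] (= prod_topology (fun _ : nat => bool)). *)

(* hd(x,y) >= k : there are at least k (distinct) coordinates where x, y differ.
   (hd takes values in omega \cup {omega}; this covers the infinite case.) *)
Definition hd_ge (k : nat) (x y : cantor_space) : Prop :=
  exists s : seq nat, [/\ uniq s, size s = k & forall i, i \in s -> x i != y i].

Definition thin (k : nat) (T : set cantor_space) : Prop :=
  forall x y, T x -> T y -> x <> y -> hd_ge k x y.

Definition maximal_thin (k : nat) (T : set cantor_space) : Prop :=
  thin k T /\ forall T', thin k T' -> T `<=` T' -> T' = T.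

Definition Borel {X : topologicalType} (A : set X) : Prop :=
  <<s [set: X], open >> A.

Definition nowhere_dense {X : topologicalType} (A : set X) : Prop :=
  interior (closure A) = set0.

Definition meager {X : topologicalType} (A : set X) : Prop :=
  exists F : nat -> set X, (forall n, nowhere_dense (F n)) /\ A `<=` \bigcup_n F n.

From mathcomp Require Import all_boot classical_sets topology cantor.
From mathcomp Require Import boolp measure.
Set Implicit Arguments. Unset Strict Implicit. Unset Printing Implicit Defensive.
Local Open Scope classical_set_scope.

(* If z lies outside a maximal k-thin set T, then adding z to T breaks
   k-thinness, so z differs from some point of T in finitely many coordinates.
   Hence countably many finite flips of T cover the Cantor space, which is not
   meager by the Baire category theorem; so T is not meager.  Borel sets have
   the Baire property, so a Borel T would be comeager in some basic cylinder
   [cyl x n].  Flipping coordinate n maps that cylinder onto itself, so it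
   would contain a point z with both z and its flip in T: two points of T at
   Hamming distance 1 < k. *)

Section meager_sets.
Variable X : topologicalType.
Implicit Types A B : set X.

Lemma nowhere_dense_set0 : nowhere_dense (@set0 X).
Proof. by rewrite /nowhere_dense closure0 interior0. Qed.

Lemma nowhere_dense_meager A : nowhere_dense A -> meager A.
Proof. by move=> ndA; exists (fun=> A); split=> // x Ax; exists 0. Qed.

Lemma meager_set0 : meager (@set0 X).
Proof. exact/nowhere_dense_meager/nowhere_dense_set0. Qed.

Lemma meagerS A B : A `<=` B -> meager B -> meager A.
Proof. by move=> AB [F [ndF BF]]; exists F; split=> //; exact: subset_trans BF. Qed.

Lemma meager_bigcup (A : nat -> set X) :
  (forall n, meager (A n)) -> meager (\bigcup_n A n).
Proof.
move=> /choice[F FP].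
pose G j := if @unpickle (nat * nat)%type j is Some (n, i) then F n i else set0.
exists G; split=> [j|x [n _ /(FP n).2[i _ Fx]]].
  rewrite /G; case: unpickle => [[n i]|]; last exact: nowhere_dense_set0.
  exact: (FP n).1.
by exists (pickle (n, i)); rewrite // /G pickleK.
Qed.

Lemma meagerU A B : meager A -> meager B -> meager (A `|` B).
Proof.
by move=> mA mB; rewrite -bigcup2E; apply: meager_bigcup => -[|[|n]] //=; exact: meager_set0.
Qed.

Lemma open_boundary_nowhere_dense (U : set X) :
  open U -> nowhere_dense (closure U `\` U).
Proof.
move=> oU; rewrite /nowhere_dense -subset0 setDE.
have <- : closure U `&` ~` U = closure (closure U `&` ~` U).
  by apply/closure_id; apply: closedI; [exact: closed_closure | exact: open_closedC].
move=> x Ix; have := interiorS (@subIsetr _ _ _) Ix; rewrite interiorC.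
by case: (interior_subset Ix).
Qed.

Definition baire_property A := exists2 U, open U & meager [set x | ~ (A x <-> U x)].

Lemma baire_property_sigma : sigma_algebra setT baire_property.
Proof.
split.
- exists set0; first exact: open0.
  by apply: meagerS meager_set0 => x /(_ (iff_refl _)).
- (* ~` closure U differs from ~` U only on the nowhere dense boundary of U. *)
  move=> A [U oU mAU]; exists (~` closure U); first exact/closed_openC/closed_closure.
  apply: meagerS (meagerU mAU (nowhere_dense_meager (open_boundary_nowhere_dense oU))).
  move=> x /= nAU; apply: contrapT => /not_orP[/contrapT AU /not_andP bd]; apply: nAU.
  have UcU : closure U x -> U x by case: bd => // /contrapT.
  split=> [[_ nAx] /UcU /AU //|ncUx]; split=> // /AU Ux; exact/ncUx/subset_closure.
- move=> A BPA; have /choice[U UP] : forall n, exists V : set X,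
      open V /\ meager [set x | ~ (A n x <-> V x)].
    by move=> n; have [V oV mV] := BPA n; exists V.
  exists (\bigcup_n U n); first by apply: bigcup_open => n _; exact: (UP n).1.
  apply: meagerS (meager_bigcup (fun n => (UP n).2)) => x /= nAU.
  apply: contrapT => nAUn; apply: nAU.
  have AUn n : A n x <-> U n x by apply: contrapT => ?; apply: nAUn; exists n.
  by split=> -[n _ /AUn]; exists n.
Qed.

Lemma Borel_baire_property A : Borel A -> baire_property A.
Proof.
apply: (smallest_sub baire_property_sigma) => U oU; exists U => //.
by apply: meagerS meager_set0 => x /(_ (iff_refl _)).
Qed.

End meager_sets.

Definition cyl (x : cantor_space) (n : nat) : set cantor_space :=
  [set y | forall i, (i < n)%N -> y i = x i].

Lemma cyl_refl x n : cyl x n x.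
Proof. by []. Qed.

Lemma cyl_le x m n : (m <= n)%N -> cyl x n `<=` cyl x m.
Proof. by move=> le_mn y xy i lt_im; apply: xy; exact: leq_trans lt_im le_mn. Qed.

Lemma cyl_eq x n y : cyl x n y -> cyl y n = cyl x n.
Proof.
by move=> xy; apply/seteqP; split=> z zP i lt_in; rewrite zP // xy.
Qed.

Lemma cyl_nbhs x n : nbhs x (cyl x n).
Proof.
elim: n => [|n IH]; first exact: filterS filterT.
have xn : nbhs x ((fun y : cantor_space => y n) @^-1` [set x n]).
  apply: (@proj_continuous nat (fun=> bool) n x); apply: open_nbhs_nbhs.
  by split=> //; exact: discrete_open.
apply: filterS (filterI IH xn) => y [xy xyn] i.
by rewrite ltnS leq_eqVlt => /predU1P[->|]; [exact: xyn | exact: xy].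
Qed.

Lemma nbhs_cylP x A : nbhs x A <-> exists n, cyl x n `<=` A.
Proof.
split=> [xA|[n xA]]; last exact: filterS xA (cyl_nbhs x n).
apply: contrapT => /forallNP noA.
have /choice[y yP] : forall n, exists y, cyl x n y /\ ~ A y.
  by move=> n; have /existsNP[y /not_implyP] := noA n; exists y.
have y_x : y @ \oo --> x.
  apply/cvg_sup => i B [_ [[C _ <-] Cxi CB]].
  by exists i.+1 => // n /= lt_in; apply: CB; rewrite /= (yP n).1.
have [N _ yA] := y_x _ xA.
exact: (yP N).2 (yA N (leqnn N)).
Qed.

Definition nowhere_dense_cyl (F : set cantor_space) :=
  forall x m, exists y n, cyl y n `<=` cyl x m `\` F.

Lemma nowhere_denseP F : nowhere_dense F <-> nowhere_dense_cyl F.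
Proof.
split=> [ndF x m | ndF].
  have [y [xy ncFy]] : exists y, cyl x m y /\ ~ closure F y.
    apply: contrapT => /forallNP cF; suff : interior (closure F) x by rewrite ndF.
    by apply/nbhs_cylP; exists m => y xy; apply: contrapT => ncFy; exact: (cF y).
  have : interior (~` F) y by rewrite interiorC.
  move=> /nbhs_cylP[n yF]; exists y, (m + n) => z yz; split.
    by rewrite -(cyl_eq xy); apply: cyl_le yz; exact: leq_addr.
  by apply: yF; apply: cyl_le yz; exact: leq_addl.
rewrite /nowhere_dense -subset0 => x /nbhs_cylP[m xF].
have [y [n yxF]] := ndF x m.
have [z [Fz yz]] := xF y (yxF y (@cyl_refl y n)).1 _ (cyl_nbhs y n).
exact: (yxF z yz).2 Fz.
Qed.

Lemma nested_cyl_limit (x : nat -> cantor_space) (m : nat -> nat) :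
  (forall n, (n <= m n)%N) ->
  (forall n, cyl (x n.+1) (m n.+1) `<=` cyl (x n) (m n)) ->
  exists z, forall n, cyl (x n) (m n) z.
Proof.
move=> m_ge nested.
have nestedW i j : (i <= j)%N -> cyl (x j) (m j) `<=` cyl (x i) (m i).
  move=> /subnKC <-; elim: (j - i) => [|d IH]; first by rewrite addn0.
  by rewrite addnS; apply: subset_trans IH; exact: nested.
exists (fun i => x i.+1 i) => n i lt_imn /=.
have [le_ni|lt_in] := leqP n i.
  exact: nestedW (leqW le_ni) _ (@cyl_refl _ _) i lt_imn.
by rewrite -(nestedW _ _ lt_in _ (@cyl_refl _ _) i (m_ge i.+1)).
Qed.

Theorem cyl_not_meager x m : ~ meager (cyl x m).
Proof.
move=> [F [ndF xF]].
have step n (c : cantor_space * nat) :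
    {d : cantor_space * nat | (n < d.2)%N /\ cyl d.1 d.2 `<=` cyl c.1 c.2 `\` F n}.
  apply: cid; have [y [p ycF]] := (nowhere_denseP _).1 (ndF n) c.1 c.2.
  exists (y, p + n.+1); split; first exact: leq_addl.
  by apply: subset_trans ycF; exact: cyl_le (leq_addr _ _).
pose c := fix c n := if n is n'.+1 then sval (step n' (c n')) else (x, m).
have [z zc] : exists z, forall n, cyl (c n).1 (c n).2 z.
  apply: nested_cyl_limit => [[|n]|n]; first exact: leq0n.
    exact: (svalP (step n (c n))).1.
  by move=> y /(svalP (step n (c n))).2[].
have [n _ Fz] := xF z (zc 0).
by have [_ /(_ z (zc n.+1))[]] := svalP (step n (c n)).
Qed.

Definition flip (b x : cantor_space) : cantor_space := fun i => x i (+) b i.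

Lemma flipK b : involutive (flip b).
Proof. by move=> x; apply/funext => i; rewrite /flip addbK. Qed.

Lemma cyl_flip b x n z : cyl (flip b x) n z <-> cyl x n (flip b z).
Proof. by split=> xz i /xz; rewrite /flip; case: (z i) (x i) (b i) => [] [] []. Qed.

Lemma nowhere_dense_flip b F : nowhere_dense F -> nowhere_dense (flip b @^-1` F).
Proof.
move=> /nowhere_denseP ndF; apply/nowhere_denseP => x m.
have [y [n yF]] := ndF (flip b x) m.
by exists (flip b y), n => z /cyl_flip /yF[/cyl_flip]; rewrite flipK.
Qed.

Lemma meager_flip b A : meager A -> meager (flip b @^-1` A).
Proof.
move=> [F [ndF AF]]; exists (fun n => flip b @^-1` F n).
by split=> [n|z /AF//]; exact: nowhere_dense_flip.
Qed.

Lemma hd_ge_sym k x y : hd_ge k x y -> hd_ge k y x.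
Proof. by case=> s [s_uniq s_size sxy]; exists s; split=> // i /sxy; rewrite eq_sym. Qed.

Lemma hd_ge_unbounded k (x y : cantor_space) :
  (forall N, exists2 i, (N <= i)%N & x i != y i) -> hd_ge k x y.
Proof.
move=> xy; elim: k => [|k [s [s_uniq s_size sxy]]]; first by exists [::].
have [i lt_si xyi] := xy (\max_(j <- s) j).+1.
have si : i \notin s.
  by apply: contraL lt_si => si; rewrite -leqNgt; exact: leq_bigmax_seq.
exists (i :: s); split=> /=; [by rewrite si | by rewrite s_size |].
by move=> j; rewrite inE => /predU1P[->|/sxy].
Qed.

Lemma hd_ge_le1 k n (x y : cantor_space) :
  (forall i, i != n -> x i = y i) -> hd_ge k x y -> (k <= 1)%N.
Proof.
move=> xy [s [s_uniq <- sxy]]; apply: (@uniq_leq_size _ _ [:: n]) => // i /sxy.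
by rewrite mem_seq1; apply: contraR => /xy ->; rewrite eqxx.
Qed.

Lemma maximal_thin_near k T z :
  maximal_thin k T -> ~ T z -> exists2 t, T t & ~ hd_ge k z t.
Proof.
move=> [thinT maxT] nTz; apply: contrapT => noT; apply: nTz.
have zT t : T t -> hd_ge k z t by move=> Tt; apply: contrapT => ?; apply: noT; exists t.
have thinTz : thin k (T `|` [set z]).
  move=> a b [Ta|->] [Tb|->] ab; [exact: thinT | exact/hd_ge_sym/zT | exact: zT | by []].
by rewrite -(maxT _ thinTz (@subsetUl _ T [set z])); right.
Qed.

Definition of_seq (s : seq bool) : cantor_space := nth false s.

Lemma maximal_thin_finite_flip k T z :
  maximal_thin k T -> exists s, T (flip (of_seq s) z).
Proof.
move=> maxT; have [Tz|nTz] := pselect (T z).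
  exists [::]; rewrite (_ : flip _ z = z) //.
  by apply/funext => i; rewrite /flip /of_seq nth_nil addbF.
have [t Tt zt] := maximal_thin_near maxT nTz.
have [N zt_eq] : exists N, forall i, (N <= i)%N -> z i = t i.
  apply: contrapT => /forallNP zt_far; apply/zt/hd_ge_unbounded => N.
  by have /existsNP[i /not_implyP[Ni /eqP]] := zt_far N; exists i.
exists (mkseq (fun i => z i (+) t i) N); rewrite (_ : flip _ z = t) //.
apply/funext => i; rewrite /flip /of_seq; have [lt_iN|le_Ni] := ltnP i N.
  by rewrite nth_mkseq // addKb.
by rewrite nth_default ?size_mkseq // addbF zt_eq.
Qed.

Lemma maximal_thin_not_meager k T : maximal_thin k T -> ~ meager T.
Proof.
move=> maxT mT.
pose V j := if @unpickle (seq bool) j is Some s then flip (of_seq s) @^-1` T else set0.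
apply: (@cyl_not_meager (fun=> false) 0); apply: (@meagerS _ _ (\bigcup_j V j)).
  move=> z _; have [s Tsz] := maximal_thin_finite_flip z maxT.
  by exists (pickle s); rewrite // /V pickleK.
apply: meager_bigcup => j; rewrite /V; case: unpickle => [s|].
  exact: meager_flip.
exact: meager_set0.
Qed.

Lemma thin_not_comeager_in_cyl k T x n :
  (1 < k)%N -> thin k T -> ~ meager (cyl x n `\` T).
Proof.
move=> k_gt1 thinT mT; pose e : cantor_space := fun i => i == n.
have e_cyl z : cyl x n z -> cyl x n (flip e z).
  by move=> xz i lt_in; rewrite /flip /e (ltn_eqF lt_in) addbF xz.
apply: (@cyl_not_meager x n); apply: meagerS (meagerU mT (meager_flip e mT)) => z xz.
have [Tz|] := pselect (T z); last by left.
have [Tez|] := pselect (T (flip e z)); last by right; split; [exact: e_cyl|].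
have z_ez : z <> flip e z.
  by move/(congr1 (fun y => y n)); rewrite /flip /e eqxx addbT; case: (z n).
have z_ez_eq i : i != n -> z i = flip e z i.
  by move/negbTE=> ni; rewrite /flip /e ni addbF.
by have := hd_ge_le1 z_ez_eq (thinT _ _ Tz Tez z_ez); rewrite leqNgt k_gt1.
Qed.

Theorem proposition18 (k : nat) (hk : (2 <= k)%N) (T : set cantor_space) :
  maximal_thin k T -> ~ Borel T /\ ~ meager T.
Proof.
move=> maxT; split; last exact: maximal_thin_not_meager maxT.
move=> /Borel_baire_property[U oU mTU].
have [[x Ux]|U0] := pselect (U !=set0).
  have [n xU] : exists n, cyl x n `<=` U by apply/nbhs_cylP/open_nbhs_nbhs.
  apply: (@thin_not_comeager_in_cyl k T x n hk maxT.1).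
  by apply: meagerS mTU => z [/xU Uz nTz] TU; exact/nTz/TU.
apply: (maximal_thin_not_meager maxT); apply: meagerS mTU => z Tz TU.
by apply: U0; exists z; exact/TU.
Qed.
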